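(* Let $\mathcal X\subseteq\mathbb R^p$, let $\mathcal A=\{a^{(1)},\dots,a^{(d)}\}$ (historical action set) and $\bar{\mathcal A}=\{\bar a^{(1)},\dots,\bar a^{(m)}\}$ (new action set) be finite sets of real actions. Let $(\boldsymbol X_i,A_i,R_i)$, $i=1,\dots,n$, be random tuples with $\boldsymbol X_i\in\mathcal X$, $A_i\in\mathcal A$, $R_i\in\mathbb R$ such that: (i) the tuples are independent; (ii) $\boldsymbol X_1,\dots,\boldsymbol X_n$ are i.i.d., distributed as a generic $\boldsymbol X$; (iii) conditionally on $\boldsymbol X_i$, $A_i$ has distribution $\widetilde\pi_i(\cdot\mid\boldsymbol X_i)$ with $\widetilde\pi_i(a\mid\boldsymbol x)>0$ for all $a\in\mathcal A$, $\boldsymbol x\in\mathcal X$; (iv) the conditional distribution of the reward given features $\boldsymbol x$ and action $a$ does not depend on $i$. For $\boldsymbol x\in\mathcal X$ and $a\in\mathcal A\cup\bar{\mathcal A}$ let $\varrho(\boldsymbol x,a)$ denote the expected reward when action $a$ is taken for a policyholder with features $\boldsymbol x$ (so $\varrho(\boldsymbol x,a)=\mathbb E[R_i\mid\boldsymbol X_i=\boldsymbol x,A_i=a]$ for $a\in\mathcal A$). Let $f_1,\dots,f_q:\mathbb R\to\mathbb R$ and $\boldsymbol f(a)=(1,f_1(a),\dots,f_q(a))^\top$. Let $D\in\mathbb R^{d\times(q+1)}$ have $k$-th row $\boldsymbol f(a^{(k)})^\top$ and $\bar D\in\mathbb R^{m\times(q+1)}$ have $k$-th row $\boldsymbol f(\bar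 a^{(k)})^\top$, and assume $D$ has full column rank $q+1$. Assume the regression assumption: for every $\boldsymbol x\in\mathcal X$ there is $\boldsymbol\beta(\boldsymbol x)\in\mathbb R^{q+1}$ with $\varrho(\boldsymbol x,a)=\boldsymbol f(a)^\top\boldsymbol\beta(\boldsymbol x)$ for all $a\in\mathcal A\cup\bar{\mathcal A}$. For each $i$ let $W_i(\boldsymbol x)\in\mathbb R^{d\times d}$ be symmetric positive definite for every $\boldsymbol x$, and set $\mathbf K_i(\boldsymbol x)=W_i(\boldsymbol x)D\,(D^\top W_i(\boldsymbol x)D)^{-1}\bar D^\top\in\mathbb R^{d\times m}$. For a deterministic policy $\bar\pi:\mathcal X\to\bar{\mathcal A}$ define the kernelized IPS estimator $$\widehat V_{\rm K}(\bar\pi)=\frac1n\sum_{i=1}^n R_i\,\frac{\langle\boldsymbol e_{A_i},\mathbf K_i(\boldsymbol X_i)\,\bar{\boldsymbol e}_{\bar\pi(\boldsymbol X_i)}\rangle}{\widetilde\pi_i(A_i\mid\boldsymbol X_i)}.$$ Then $\widehat V_{\rm K}(\bar\pi)$ is unbiased for $V(\bar\pi)=\mathbb E[\varrho(\boldsymbol X,\bar\pi(\boldsymbol X))]$.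
   Context: $\boldsymbol e_a\in\{0,1\}^d$ denotes the one-hot encoding of $a\in\mathcal A$ (entry $k$ equals $\mathbf 1_{\{a=a^{(k)}\}}$), and $\bar{\boldsymbol e}_{\bar a}\in\{0,1\}^m$ the one-hot encoding of $\bar a\in\bar{\mathcal A}$. $V(\bar\pi)$ is the value of $\bar\pi$, i.e. the expected reward when actions are chosen by $\bar\pi$. All expectations appearing are assumed finite. *)

From HB Require Import structures.
From mathcomp Require Import all_boot all_order all_algebra.
From mathcomp Require Import all_classical all_reals all_analysis.
Set Implicit Arguments. Unset Strict Implicit. Unset Printing Implicit Defensive.
Import Order.TTheory GRing.Theory Num.Theory.
Local Open Scope classical_set_scope.
Local Open Scope ring_scope.

(* f(a) = (1, f_1(a), ..., f_q(a)) as a row vector of size q+1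
   (f : 'I_q -> R -> R lists f_1, ..., f_q). *)
Definition fvec (R : pzRingType) (q : nat) (f : 'I_q -> R -> R) (x : R)
  : 'rV[R]_(q.+1) :=
  \row_(j < q.+1) match unlift ord0 j with None => 1 | Some j' => f j' x end.

Definition design (R : pzRingType) (q r : nat) (f : 'I_q -> R -> R)
  (act : 'I_r -> R) : 'M[R]_(r, q.+1) :=
  \matrix_(k < r, j < q.+1) fvec f (act k) 0 j.

Definition onehot (R : pzRingType) (r : nat) (k : 'I_r) : 'rV[R]_r :=
  \row_(l < r) (l == k)%:R.
Arguments onehot {R r} k.

Definition sym_posdef (R : numDomainType) (r : nat) (M : 'M[R]_r) : Prop :=
  M^T = M /\ forall v : 'rV[R]_r, v != 0 -> 0 < (v *m M *m v^T) 0 0.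

Definition Kmat (R : fieldType) (q d m : nat) (D : 'M[R]_(d, q.+1))
  (Dbar : 'M[R]_(m, q.+1)) (W : 'M[R]_d) : 'M[R]_(d, m) :=
  W *m D *m invmx (D^T *m W *m D) *m Dbar^T.

Definition tuple_events (R : realType) (dO : measure_display)
  (Omega : measurableType dO) (p d : nat)
  (X : Omega -> p.-tuple R) (A : Omega -> 'I_d) (Rw : Omega -> R)
  : set (set Omega) :=
  [set E | exists (B : set (p.-tuple R)) (S : set 'I_d) (C : set R),
      [/\ measurable B, measurable C &
          E = X @^-1` B `&` A @^-1` S `&` Rw @^-1` C]].

Definition tuples_independent (R : realType) (dO : measure_display)
  (Omega : measurableType dO) (P : probability Omega R) (n p d : nat)
  (X : 'I_n -> Omega -> p.-tuple R) (A : 'I_n -> Omega -> 'I_d)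
  (Rw : 'I_n -> Omega -> R) : Prop :=
  forall (J : {set 'I_n}) (F : 'I_n -> set Omega),
    (forall i, i \in J -> <<s tuple_events (X i) (A i) (Rw i) >> (F i)) ->
    P (\big[setI/setT]_(i in J) F i) = (\prod_(i in J) P (F i))%E.

From HB Require Import structures.
From mathcomp Require Import all_boot all_order all_algebra.
From mathcomp Require Import all_classical all_reals all_analysis.
From mathcomp Require Import measurable_realfun ring lra.
Import Order.TTheory GRing.Theory Num.Theory.
Import HBNNSimple.
Set Implicit Arguments. Unset Strict Implicit. Unset Printing Implicit Defensive.
Local Open Scope classical_set_scope.
Local Open Scope ring_scope.

(* Each summand of the estimator has mean V(pibar). Conditioning on X_i and on
   the event {A_i = k}, the reward model and the propensity condition give
   E[R_i 1{A_i = k} g(X_i)] = E[pit_i(k|X_i) rho(X_i, a_k) g(X_i)] for every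
   measurable g. With g = K_i(.)_{k, pibar(.)} / pit_i(k|.) the propensities
   cancel, and summing over k leaves E[sum_k rho(X_i, a_k) K_i(X_i)_{k, pibar(X_i)}].
   By the regression assumption rho(x, a_k) = (D beta(x))_k, and
   (D beta)^T W D (D^T W D)^-1 Dbar^T = (Dbar beta)^T, so the inner sum is
   rho(X_i, pibar(X_i)), whose mean is V(pibar) because X_i has the law of X. *)

Lemma approximation_le {R : realType} {dT : measure_display}
    {T : measurableType dT} (h : T -> R) :
  measurable_fun setT h -> (forall x, 0 <= h x) ->
  exists s : {nnsfun T >-> R}^nat, [/\ nondecreasing_seq (s : (T -> R)^nat),
    forall x, EFin \o s ^~ x @ \oo --> (h x)%:E & forall n x, s n x <= h x].
Proof.
move=> /measurable_EFinP mh h0.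
have h0' x : setT x -> (0 <= (EFin \o h) x)%E by rewrite lee_fin.
exists (nnsfun_approx measurableT mh); split.
- exact: nd_nnsfun_approx.
- by move=> x; exact: cvg_nnsfun_approx.
- by move=> n x; rewrite -lee_fin nnsfun_approxE; exact: le_approx.
Qed.

Section approximation_comp.
Context {R : realType} {dO dT : measure_display} {Omega : measurableType dO}
  {T : measurableType dT} (mu : {measure set Omega -> \bar R}) (X : Omega -> T).
Hypothesis mX : measurable_fun setT X.
Variables (h : T -> R) (s : {nnsfun T >-> R}^nat).
Hypothesis nd_s : nondecreasing_seq (s : (T -> R)^nat).
Hypothesis cvg_s : forall x, EFin \o s ^~ x @ \oo --> (h x)%:E.
Hypothesis s_le : forall n x, s n x <= h x.

Let cvg_mul (H : Omega -> R) w :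
  (fun n => (H w * s n (X w))%:E) @ \oo --> (H w * h (X w))%:E.
Proof.
under eq_fun do rewrite EFinM.
by rewrite EFinM; apply: cvgeM; [exact: mule_def_fin|exact: cvg_cst|exact: cvg_s].
Qed.

Let mmul (H : Omega -> R) n : measurable_fun setT H ->
  measurable_fun setT (fun w => (H w * s n (X w))%:E).
Proof.
by move=> mH; apply/measurable_EFinP; apply: measurable_funM => //;
  exact: measurableT_comp.
Qed.

Lemma cvg_ge0_integral_mul_comp (H : Omega -> R) :
  measurable_fun setT H -> (forall w, 0 <= H w) ->
  (\int[mu]_w (H w * s n (X w))%:E @[n --> \oo] -->
   \int[mu]_w (H w * h (X w))%:E)%E.
Proof.
move=> mH H0.
have -> : (\int[mu]_w (H w * h (X w))%:E =
    \int[mu]_w limn (fun n => (H w * s n (X w))%:E))%E.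
  by apply: eq_integral => w _; apply/esym/cvg_lim => //; exact: cvg_mul.
apply: cvg_monotone_convergence => //.
- by move=> n; exact: mmul.
- by move=> n w _; rewrite lee_fin mulr_ge0.
- by move=> w _ m n mn; rewrite lee_fin ler_wpM2l//; exact/lefP/nd_s.
Qed.

Lemma cvg_integrable_mul_comp (H : Omega -> R) :
  measurable_fun setT H ->
  mu.-integrable setT (fun w => (H w * h (X w))%:E) ->
  (\int[mu]_w (H w * s n (X w))%:E @[n --> \oo] -->
   \int[mu]_w (H w * h (X w))%:E)%E.
Proof.
move=> mH iHh.
have dom : {ae mu, forall w n, setT w ->
    `|(H w * s n (X w))%:E| <= `|(H w * h (X w))%:E|}%E.
  apply: aeW => w n _; rewrite lee_fin !normrM ler_wpM2l// !ger0_norm//.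
  exact: le_trans (s_le n (X w)).
by case: (dominated_convergence measurableT (fun n => mmul n mH)
  (measurable_int _ iHh) (aeW _ (fun w _ => @cvg_mul H w))
  (integrable_abse iHh) dom).
Qed.

End approximation_comp.

Lemma normr_indic_le1 {T : Type} {R : numDomainType} (A : set T) (x : T) :
  `|\1_A x| <= 1 :> R.
Proof. by rewrite indicE; case: (_ \in _); rewrite ?normr1 ?normr0. Qed.

(* [cond_eq mu X F G]: F and G have the same conditional expectation given X,
   i.e. the same integral over every event {X in B}. *)
Definition cond_eq {R : realType} {dO dT : measure_display}
    {Omega : measurableType dO} {T : measurableType dT}
    (mu : {measure set Omega -> \bar R}) (X : Omega -> T) (F G : Omega -> R)
    : Prop :=
  forall B, measurable B ->
  (\int[mu]_(w in X @^-1` B) (F w)%:E = \int[mu]_(w in X @^-1` B) (G w)%:E)%E.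

Section cond_eq.
Context {R : realType} {dO dT : measure_display} {Omega : measurableType dO}
  {T : measurableType dT} (mu : {measure set Omega -> \bar R}) (X : Omega -> T).
Hypothesis mX : measurable_fun setT X.
Implicit Types (F G : Omega -> R) (B : set T).

Lemma indic_preimage B w : \1_(X @^-1` B) w = \1_B (X w) :> R.
Proof. by rewrite !indicE; congr (_%:R); apply/idP/idP => /set_mem; exact: mem_set. Qed.

Lemma integral_preimageE F B :
  (\int[mu]_(w in X @^-1` B) (F w)%:E = \int[mu]_w (F w * \1_B (X w))%:E)%E.
Proof.
rewrite integral_mkcond epatch_indic; apply: eq_integral => w _ /=.
by rewrite indic_preimage.
Qed.

Lemma le_integrable_mul_comp F (u v : T -> R) :
  measurable_fun setT F -> measurable_fun setT v ->
  (forall x, `|v x| <= `|u x|) ->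
  mu.-integrable setT (fun w => (F w * u (X w))%:E) ->
  mu.-integrable setT (fun w => (F w * v (X w))%:E).
Proof.
move=> mF mv vu; apply: le_integrable => //.
  by apply/measurable_EFinP; apply: measurable_funM => //; exact: measurableT_comp.
by move=> w _ /=; rewrite lee_fin !normrM ler_wpM2l.
Qed.

Lemma integrable_mul_comp F (v : T -> R) :
  mu.-integrable setT (EFin \o F) -> measurable_fun setT v ->
  (forall x, `|v x| <= 1) ->
  mu.-integrable setT (fun w => (F w * v (X w))%:E).
Proof.
move=> iF mv v1; have /measurable_EFinP mF := measurable_int _ iF.
apply: (@le_integrable_mul_comp _ (fun=> 1)) => //; first by move=> x; rewrite normr1.
by apply: eq_integrable iF => // w _; rewrite /= mulr1.
Qed.

Lemma integrable_mul_indic_comp F B : measurable B ->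
  mu.-integrable setT (EFin \o F) ->
  mu.-integrable setT (fun w => (F w * \1_B (X w))%:E).
Proof.
by move=> mB iF; apply: integrable_mul_comp => // x; exact: normr_indic_le1.
Qed.

Lemma cond_eq_integral_nnsfun F G (s : {nnsfun T >-> R}) :
  mu.-integrable setT (EFin \o F) -> mu.-integrable setT (EFin \o G) ->
  cond_eq mu X F G ->
  (\int[mu]_w (F w * s (X w))%:E = \int[mu]_w (G w * s (X w))%:E)%E.
Proof.
move=> iF iG FG.
have termE H c B : measurable B -> mu.-integrable setT (EFin \o H) ->
    (\int[mu]_w (H w * (c * \1_B (X w)))%:E =
     c%:E * \int[mu]_(w in X @^-1` B) (H w)%:E)%E.
  move=> mB iH; rewrite integral_preimageE -integralZl//; last first.
    exact: integrable_mul_indic_comp.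
  by apply: eq_integral => w _; rewrite -EFinM mulrCA.
have iterm H : mu.-integrable setT (EFin \o H) -> forall c,
    mu.-integrable setT (fun w => (H w * (c * \1_(s @^-1` [set c]) (X w)))%:E).
  move=> iH c; under eq_fun do rewrite mulrCA EFinM.
  apply: integrableZl => //.
  by apply: integrable_mul_indic_comp => //; exact: measurable_funPTI.
under eq_integral do rewrite fimfunEord mulr_sumr -sumEFin.
under [RHS]eq_integral do rewrite fimfunEord mulr_sumr -sumEFin.
rewrite !integral_sum// => [|i|i]; try exact: iterm.
apply: eq_bigr => i _.
by rewrite !termE// ?FG//; exact: measurable_funPTI.
Qed.

Lemma ge0_cond_eq_integrable F G : mu.-integrable setT (EFin \o F) ->
  measurable_fun setT G -> (forall w, 0 <= G w) -> cond_eq mu X F G ->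
  mu.-integrable setT (EFin \o G).
Proof.
move=> iF mG G0 FG; apply/integrableP; split; first exact/measurable_EFinP.
under eq_integral do rewrite /= ger0_norm//.
have := FG setT measurableT; rewrite preimage_setT => <-.
by case/fin_numPlt/andP: (integrable_fin_num measurableT iF).
Qed.

Lemma ge0_cond_eq_le_integral F G (h : T -> R) :
  mu.-integrable setT (EFin \o F) ->
  measurable_fun setT G -> (forall w, 0 <= G w) -> cond_eq mu X F G ->
  measurable_fun setT h -> (forall x, 0 <= h x) ->
  (\int[mu]_w (G w * h (X w))%:E <= \int[mu]_w (`|F w| * h (X w))%:E)%E.
Proof.
move=> iF mG G0 FG mh h0.
have /measurable_EFinP mF := measurable_int _ iF.
have iG := ge0_cond_eq_integrable iF mG G0 FG.
have [s [nd_s cvg_s s_le]] := approximation_le mh h0.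
apply: (lee_cvg_to (cvg_ge0_integral_mul_comp mX nd_s cvg_s mG G0) (cvg_cst _)).
apply: nearW => n; rewrite -(cond_eq_integral_nnsfun _ iF iG FG).
have mFs : measurable_fun setT (fun w => (F w * s n (X w))%:E).
  by apply/measurable_EFinP; apply: measurable_funM => //; exact: measurableT_comp.
rewrite (le_trans (lee_abs _)) // (le_trans (le_abse_integral _ _ mFs)) //.
apply: ge0_le_integral => //.
- exact: measurableT_comp.
- apply/measurable_EFinP; apply: measurable_funM; last exact: measurableT_comp.
  exact: measurableT_comp.
- by move=> w _; rewrite /= lee_fin normrM ler_wpM2l// ger0_norm.
Qed.

Lemma cond_eq_integral_ge0_comp F G (h : T -> R) :
  mu.-integrable setT (EFin \o F) -> mu.-integrable setT (EFin \o G) ->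
  cond_eq mu X F G -> measurable_fun setT h -> (forall x, 0 <= h x) ->
  mu.-integrable setT (fun w => (F w * h (X w))%:E) ->
  mu.-integrable setT (fun w => (G w * h (X w))%:E) ->
  (\int[mu]_w (F w * h (X w))%:E = \int[mu]_w (G w * h (X w))%:E)%E.
Proof.
move=> iF iG FG mh h0 iFh iGh.
have /measurable_EFinP mF := measurable_int _ iF.
have /measurable_EFinP mG := measurable_int _ iG.
have [s [nd_s cvg_s s_le]] := approximation_le mh h0.
have /cvg_lim <- // := cvg_integrable_mul_comp mX cvg_s s_le mF iFh.
have /cvg_lim <- // := cvg_integrable_mul_comp mX cvg_s s_le mG iGh.
congr (lim (_ @ \oo)); apply/funext => n; exact: cond_eq_integral_nnsfun.
Qed.

Lemma cond_eq_integral_comp F G (u : T -> R) :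
  mu.-integrable setT (EFin \o F) -> mu.-integrable setT (EFin \o G) ->
  cond_eq mu X F G -> measurable_fun setT u ->
  mu.-integrable setT (fun w => (F w * u (X w))%:E) ->
  mu.-integrable setT (fun w => (G w * u (X w))%:E) ->
  (\int[mu]_w (F w * u (X w))%:E = \int[mu]_w (G w * u (X w))%:E)%E.
Proof.
move=> iF iG FG mU iFu iGu.
have uE x : u x = u^\+ x - u^\- x by rewrite -{1}(funrposBneg u).
have le_u x : u^\+ x <= `|u x| /\ u^\- x <= `|u x|.
  by rewrite -[`|u x|]/((Num.norm \o u) x) -funrposDneg lerDl lerDr.
have mup : measurable_fun setT u^\+ by exact: measurable_funrpos.
have mun : measurable_fun setT u^\- by exact: measurable_funrneg.
have up_le x : `|u^\+ x| <= `|u x| by rewrite ger0_norm ?(le_u x).1.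
have un_le x : `|u^\- x| <= `|u x| by rewrite ger0_norm ?(le_u x).2.
have /measurable_EFinP mF := measurable_int _ iF.
have /measurable_EFinP mG := measurable_int _ iG.
under eq_integral do rewrite uE mulrBr EFinB.
under [RHS]eq_integral do rewrite uE mulrBr EFinB.
have ipart (H : Omega -> R) (v : T -> R) :
    measurable_fun setT H -> measurable_fun setT v -> (forall x, `|v x| <= `|u x|) ->
    mu.-integrable setT (fun w => (H w * u (X w))%:E) ->
    mu.-integrable setT (EFin \o (fun w => H w * v (X w))).
  exact: le_integrable_mul_comp.
rewrite !integralB_EFin ?(@cond_eq_integral_ge0_comp F G)//;
  by [apply: ipart iFu|apply: ipart iGu].
Qed.

Section sign_comp.
Variables (psi : T -> R) (c : Omega -> R).
Hypotheses (mpsi : measurable_fun setT psi) (mc : measurable_fun setT c).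
Hypothesis c0 : forall w, 0 <= c w.

Let G w := psi (X w) * c w.
Let Bp := [set x | 0 <= psi x].

Let mBp : measurable Bp.
Proof. by rewrite -[Bp]setTI; exact: measurable_fun_le. Qed.

Let mG : measurable_fun setT G.
Proof. by apply: measurable_funM => //; exact: measurableT_comp. Qed.

Let G_Bp_ge0 w : 0 <= G w * \1_Bp (X w).
Proof.
rewrite indicE; have [/set_mem psi0|] := boolP (X w \in Bp); last by rewrite mulr0.
by rewrite mulr1 mulr_ge0.
Qed.

Let G_Bm_le0 w : G w * \1_(~` Bp) (X w) <= 0.
Proof.
rewrite indicE; have [/set_mem psi0|] := boolP (X w \in ~` Bp); last by rewrite mulr0.
by rewrite mulr1 mulr_le0_ge0//; apply/ltW; rewrite ltNge; apply/negP.
Qed.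

Let absG w : `|G w| = G w * \1_Bp (X w) - G w * \1_(~` Bp) (X w).
Proof.
have := G_Bp_ge0 w; have := G_Bm_le0 w; rewrite !indicE in_setC.
case: (X w \in Bp) => /=; rewrite ?mulr1 ?mulr0 ?subr0 ?sub0r => G0 G0'.
  by rewrite ger0_norm.
by rewrite ler0_norm.
Qed.

Lemma cond_eq_comp_mul_integrable F : mu.-integrable setT (EFin \o F) ->
  cond_eq mu X F G -> mu.-integrable setT (EFin \o G).
Proof.
move=> iF FG; apply/integrableP; split; first exact/measurable_EFinP.
have fin B : measurable B -> (\int[mu]_w (G w * \1_B (X w))%:E \is a fin_num)%E.
  move=> mB; rewrite -integral_preimageE -FG// integral_preimageE.
  exact/(integrable_fin_num measurableT)/integrable_mul_indic_comp.
pose Gm w := - (G w * \1_(~` Bp) (X w)).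
have Gm0 w : 0 <= Gm w by rewrite oppr_ge0.
have mGm : measurable_fun setT Gm.
  apply: measurableT_comp => //; apply: measurable_funM => //.
  by apply: measurableT_comp => //; exact/measurable_indic/measurableC.
under eq_integral do rewrite /= absG -/(Gm _) EFinD.
rewrite ge0_integralD//; last 4 first.
- by move=> w _; rewrite lee_fin.
- apply/measurable_EFinP; apply: measurable_funM => //.
  by apply: measurableT_comp => //; exact: measurable_indic.
- by move=> w _; rewrite lee_fin.
- exact/measurable_EFinP.
apply: lte_add_pinfty; first by case/fin_numPlt/andP: (fin _ mBp).
have -> : (\int[mu]_w (Gm w)%:E = - \int[mu]_w (G w * \1_(~` Bp) (X w))%:E)%E.
  rewrite -[LHS]oppeK -integral_ge0N; last by move=> w _; rewrite lee_fin.
  by congr (- _)%E; apply: eq_integral => w _; rewrite /Gm EFinN oppeK.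
by rewrite ltey_eq fin_numN (fin _ (measurableC mBp)).
Qed.

Lemma cond_eq_comp_mul_abs_le_integral F (h : T -> R) :
  mu.-integrable setT (EFin \o F) -> cond_eq mu X F G ->
  measurable_fun setT h -> (forall x, 0 <= h x) ->
  (\int[mu]_w (`|G w| * h (X w))%:E <= \int[mu]_w (`|F w| * h (X w))%:E)%E.
Proof.
move=> iF FG mh h0; have iG := cond_eq_comp_mul_integrable iF FG.
have /measurable_EFinP mF := measurable_int _ iF.
(* The sign of G is a function of X, so F * sg(X) is a version of |G| given X. *)
pose sg x : R := \1_Bp x - \1_(~` Bp) x.
have msg : measurable_fun setT sg.
  by apply: measurable_funB; apply: measurable_indic => //; exact: measurableC.
have sg1 x : `|sg x| <= 1.
  rewrite /sg !indicE in_setC.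
  by case: (x \in Bp); rewrite /= ?subr0 ?sub0r ?normrN normr1.
have absGE w : `|G w| = G w * sg (X w) by rewrite absG mulrBr.
have FGsg : cond_eq mu X (fun w => F w * sg (X w)) (fun w => `|G w|).
  move=> B mB; rewrite !integral_preimageE.
  under [RHS]eq_integral do rewrite absGE -mulrA.
  under eq_integral do rewrite -mulrA.
  have sgB1 x : `|sg x * \1_B x| <= 1.
    by rewrite normrM -[1]mulr1 ler_pM ?sg1 ?normr_indic_le1.
  have msgB : measurable_fun setT (fun x => sg x * \1_B x).
    by apply: measurable_funM => //; exact: measurable_indic.
  by apply: (@cond_eq_integral_comp F G (fun x => sg x * \1_B x)) => //;
    exact: (@integrable_mul_comp _ (fun x => sg x * \1_B x)).
apply: (le_trans (ge0_cond_eq_le_integral _ _ _ FGsg mh h0)) => //.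
- exact: integrable_mul_comp.
- exact: measurableT_comp.
apply: ge0_le_integral => //.
- by move=> w _; rewrite lee_fin mulr_ge0.
- apply/measurable_EFinP; apply: measurable_funM; last exact: measurableT_comp.
  by apply: measurableT_comp => //; apply: measurable_funM => //; exact: measurableT_comp.
- apply/measurable_EFinP; apply: measurable_funM; last exact: measurableT_comp.
  exact: measurableT_comp.
- by move=> w _; rewrite lee_fin ler_wpM2r// normrM ler_piMr.
Qed.

End sign_comp.

Lemma cond_eq_comp_integral F (psi u : T -> R) :
  mu.-integrable setT (EFin \o F) -> measurable_fun setT psi ->
  cond_eq mu X F (fun w => psi (X w)) -> measurable_fun setT u ->
  mu.-integrable setT (fun w => (F w * u (X w))%:E) ->
  mu.-integrable setT (fun w => (psi (X w) * u (X w))%:E) /\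
  (\int[mu]_w (F w * u (X w))%:E = \int[mu]_w (psi (X w) * u (X w))%:E)%E.
Proof.
move=> iF mpsi FG mU iFu.
have FG1 : cond_eq mu X F (fun w => psi (X w) * (fun=> 1) w).
  by move=> B mB; under [RHS]eq_integral do rewrite mulr1; exact: FG.
have iG : mu.-integrable setT (EFin \o (fun w => psi (X w))).
  apply: eq_integrable (cond_eq_comp_mul_integrable mpsi (measurable_cst _)
    (fun=> ler01) iF FG1) => //.
  by move=> w _; rewrite /= mulr1.
have mpsiX : measurable_fun setT (fun w => psi (X w)) by exact: measurableT_comp.
have iGu : mu.-integrable setT (fun w => (psi (X w) * u (X w))%:E).
  apply/integrableP; split.
    by apply/measurable_EFinP; apply: measurable_funM => //; exact: measurableT_comp.
  have mabsu : measurable_fun setT (fun x => `|u x|) by exact: measurableT_comp.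
  have le_abs := cond_eq_comp_mul_abs_le_integral mpsi (measurable_cst _)
    (fun=> ler01) iF FG1 mabsu (fun x => normr_ge0 _).
  case/integrableP: iFu => _; apply: le_lt_trans.
  have absM (H : Omega -> R) : (\int[mu]_w `|(H w * u (X w))%:E| =
      \int[mu]_w (`|H w| * `|u (X w)|)%:E)%E.
    by apply: eq_integral => w _; rewrite abse_EFin normrM.
  by rewrite !absM; under eq_integral do rewrite -[psi (X _)]mulr1.
by split => //; exact: cond_eq_integral_comp.
Qed.

End cond_eq.

Lemma integral_comp_same_law {R : realType} {dO dT : measure_display}
    {Omega : measurableType dO} {T : measurableType dT}
    (mu : {measure set Omega -> \bar R}) (X Y : Omega -> T) (phi : T -> R) :
  measurable_fun setT X -> measurable_fun setT Y ->
  (forall B, measurable B -> mu (X @^-1` B) = mu (Y @^-1` B)) ->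
  measurable_fun setT phi ->
  mu.-integrable setT (fun w => (phi (Y w))%:E) ->
  (\int[mu]_w (phi (X w))%:E = \int[mu]_w (phi (Y w))%:E)%E.
Proof.
move=> mX mY XY mphi iY.
have law (g : T -> \bar R) :
    (\int[pushforward mu X]_y g y = \int[pushforward mu Y]_y g y)%E.
  by apply: eq_measure_integral => B mB _; exact: XY.
have /measurable_EFinP mphiE := mphi.
have iX : mu.-integrable setT (fun w => (phi (X w))%:E).
  apply/integrableP; split; first exact/measurable_EFinP/measurableT_comp.
  have mabs : measurable_fun setT (fun y => `|(phi y)%:E|)%E by exact: measurableT_comp.
  have -> : (\int[mu]_w `|(phi (X w))%:E| =
      \int[pushforward mu X]_y `|(phi y)%:E|)%E.
    by rewrite ge0_integral_pushforward// preimage_setT.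
  by rewrite law ge0_integral_pushforward// preimage_setT; case/integrableP: iY.
have -> : (\int[mu]_w (phi (X w))%:E = \int[pushforward mu X]_y (phi y)%:E)%E.
  by rewrite integral_pushforward// preimage_setT.
by rewrite law integral_pushforward// preimage_setT.
Qed.

Lemma measurable_inv {R : realType} : measurable_fun setT (@GRing.inv R).
Proof.
have -> : [set: R] = [set x | x != 0] `|` [set 0].
  by apply/seteqP; split => x //= _; case: (eqVneq x 0) => ?; [right|left].
apply/measurable_funU => //; first exact: open_measurable (@open_neq R 0).
split; last exact: measurable_fun_set1.
apply: open_continuous_measurable_fun; first exact: open_neq.
by move=> x; rewrite inE => /inv_continuous.
Qed.

Section measurable_matrix.
Context {R : realType} {dT : measure_display} {T : measurableType dT}.

Definition measurable_mx (a b : nat) (M : T -> 'M[R]_(a, b)) : Prop :=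
  forall i j, measurable_fun setT (fun x => M x i j).

Lemma measurable_mx_cst a b (M : 'M[R]_(a, b)) : measurable_mx (fun=> M).
Proof. by move=> i j; exact: measurable_cst. Qed.

Lemma measurable_mx_mul a b c (M : T -> 'M[R]_(a, b)) (N : T -> 'M[R]_(b, c)) :
  measurable_mx M -> measurable_mx N -> measurable_mx (fun x => M x *m N x).
Proof.
move=> mM mN i j; under eq_fun do rewrite mxE.
by apply: measurable_sum => l; exact: measurable_funM.
Qed.

Lemma measurable_det n (M : T -> 'M[R]_n) :
  measurable_mx M -> measurable_fun setT (fun x => \det (M x)).
Proof.
move=> mM; apply: measurable_sum => s; apply: measurable_funM => //.
by apply: measurable_prod => i _; exact: mM.
Qed.

Lemma measurable_mx_invmx n (M : T -> 'M[R]_n) :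
  measurable_mx M -> (forall x, M x \in unitmx) ->
  measurable_mx (fun x => invmx (M x)).
Proof.
move=> mM uM i j; under eq_fun do rewrite /invmx uM !mxE.
apply: measurable_funM; first exact: measurableT_comp measurable_inv (measurable_det mM).
apply: measurable_funM => //; apply: measurable_det => k l.
by under eq_fun do rewrite !mxE; exact: mM.
Qed.

End measurable_matrix.

Lemma measurable_fun_ord_select {R : realType} {dT : measure_display}
    {T : measurableType dT} m (s : T -> 'I_m) (h : 'I_m -> T -> R) :
  (forall j, measurable (s @^-1` [set j])) ->
  (forall j, measurable_fun setT (h j)) ->
  measurable_fun setT (fun x => h (s x) x).
Proof.
move=> ms mh.
have -> : (fun x => h (s x) x) = fun x => \sum_j \1_(s @^-1` [set j]) x * h j x.
  apply/funext => x; rewrite (bigD1 (s x))//= big1 => [|j /negbTE sj].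
    by rewrite addr0 indicE mem_set// mul1r.
  by rewrite indicE memNset ?mul0r//= => /eqP; rewrite eq_sym sj.
by apply: measurable_sum => j; apply: measurable_funM => //; exact: measurable_indic.
Qed.

Lemma onehot_mulmxE (R : pzRingType) d m (K : 'M[R]_(d, m)) a b :
  (onehot a *m K *m (onehot b)^T) 0 0 = K a b.
Proof.
rewrite !mxE (bigD1 b)//= big1 => [|j /negbTE jb]; last by rewrite !mxE jb mulr0.
rewrite !mxE eqxx mulr1 addr0 (bigD1 a)//= big1 => [|j /negbTE ja].
  by rewrite !mxE eqxx mul1r addr0.
by rewrite !mxE ja mul0r.
Qed.

Lemma design_mulmxE (R : pzRingType) q r (f : 'I_q -> R -> R)
    (act : 'I_r -> R) (beta : 'cV[R]_q.+1) k :
  (design f act *m beta) k 0 = (fvec f (act k) *m beta) 0 0.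
Proof. by rewrite !mxE; apply: eq_bigr => l _; rewrite !mxE. Qed.

Section Kmat.
Context {R : realFieldType} {d m q : nat}.
Variables (D : 'M[R]_(d, q.+1)) (Dbar : 'M[R]_(m, q.+1)) (W : 'M[R]_d).
Hypotheses (rD : \rank D = q.+1) (pdW : sym_posdef W).

Lemma unitmx_posdef_gram : D^T *m W *m D \in unitmx.
Proof.
case: pdW => _ pW; rewrite unitmxE unitfE; apply/negP => /det0P[v v0 vM0].
have Dv0 : v *m D^T != 0.
  by rewrite mulmx_free_eq0 // /row_free mxrank_tr rD.
have := pW _ Dv0.
have -> : v *m D^T *m W *m (v *m D^T)^T = v *m (D^T *m W *m D) *m v^T.
  by rewrite trmx_mul trmxK !mulmxA.
by rewrite vM0 mul0mx mxE ltxx.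
Qed.

Lemma trmx_mul_Kmat (beta : 'cV[R]_q.+1) :
  (D *m beta)^T *m Kmat D Dbar W = (Dbar *m beta)^T.
Proof.
have -> : (D *m beta)^T *m Kmat D Dbar W =
    beta^T *m ((D^T *m W *m D) *m invmx (D^T *m W *m D)) *m Dbar^T.
  by rewrite /Kmat trmx_mul !mulmxA.
by rewrite mulmxV ?unitmx_posdef_gram// mulmx1 trmx_mul.
Qed.

End Kmat.

Lemma sum_fvec_Kmat (R : realFieldType) d m q (f : 'I_q -> R -> R)
    (act : 'I_d -> R) (actbar : 'I_m -> R) (W : 'M[R]_d) (beta : 'cV[R]_q.+1) j :
  \rank (design f act) = q.+1 -> sym_posdef W ->
  \sum_k (fvec f (act k) *m beta) 0 0 * Kmat (design f act) (design f actbar) W k j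
  = (fvec f (actbar j) *m beta) 0 0.
Proof.
move=> rD pdW; rewrite -design_mulmxE.
move: (trmx_mul_Kmat (design f actbar) rD pdW beta).
move=> /(congr1 (fun M : 'M[R]_(1, m) => M 0 j)); rewrite [in RHS]mxE => <-.
by rewrite mxE; apply: eq_bigr => k _; rewrite [(_ ^T) 0 k]mxE design_mulmxE.
Qed.

Section action_term.
Context {R : realType} {dO dT : measure_display} {Omega : measurableType dO}
  {T : measurableType dT} (P : probability Omega R) (X : Omega -> T).
Hypothesis mX : measurable_fun setT X.
Variables (S : set Omega) (Y : Omega -> R) (pi r : T -> R).
Hypotheses (mS : measurable S) (iY : P.-integrable setT (EFin \o Y)).
Hypotheses (mpi : measurable_fun setT pi) (mr : measurable_fun setT r).
Hypothesis propensity : forall B, measurable B ->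
  P (X @^-1` B `&` S) = (\int[P]_(w in X @^-1` B) (pi (X w))%:E)%E.
Hypothesis reward : forall B, measurable B ->
  (\int[P]_(w in X @^-1` B `&` S) (Y w)%:E =
   \int[P]_(w in X @^-1` B `&` S) (r (X w))%:E)%E.

Let integral_setI_indic (F : Omega -> R) E :
  (\int[P]_(w in E `&` S) (F w)%:E = \int[P]_(w in E) (F w * \1_S w)%:E)%E.
Proof. by rewrite integral_mkcondr epatch_indic. Qed.

Let iYS : P.-integrable setT (EFin \o (fun w => Y w * \1_S w)).
Proof.
have /measurable_EFinP mY := measurable_int _ iY.
apply: le_integrable iY => //.
  by apply/measurable_EFinP; apply: measurable_funM => //; exact: measurable_indic.
by move=> w _ /=; rewrite lee_fin normrM ler_piMr ?normr_indic_le1.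
Qed.

Let indic_pi : cond_eq P X \1_S (fun w => pi (X w)).
Proof.
move=> B mB; have mXB : measurable (X @^-1` B).
  by rewrite -[X @^-1` B]setTI; exact: mX.
by rewrite integral_indic// [S `&` _]setIC; exact: propensity.
Qed.

Let reward_pi : cond_eq P X (fun w => Y w * \1_S w)
  (fun w => pi (X w) * r (X w)).
Proof.
(* Replace Y by r(X) on S (reward model), then 1_S by pi(X) (propensity). *)
have YS_rS : cond_eq P X (fun w => Y w * \1_S w) (fun w => r (X w) * \1_S w).
  by move=> B mB; rewrite -!integral_setI_indic; exact: reward.
have irS := cond_eq_comp_mul_integrable mX mr (measurable_indic mS)
  (fun w => ler0n _ _) iYS YS_rS.
move=> B mB; rewrite YS_rS// !integral_preimageE//.
have iSrB : P.-integrable setT (fun w => (\1_S w * (r (X w) * \1_B (X w)))%:E).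
  apply: eq_integrable (integrable_mul_indic_comp mX mB irS) => // w _.
  by rewrite /= mulrCA mulrA.
have [_ ] := cond_eq_comp_integral mX (integrable_indic P mS) mpi indic_pi
  (measurable_funM mr (measurable_indic mB)) iSrB.
have -> : (\int[P]_w (r (X w) * \1_S w * \1_B (X w))%:E =
    \int[P]_w (\1_S w * (r \* \1_B) (X w))%:E)%E.
  by apply: eq_integral => w _; congr EFin; rewrite /=; ring.
by move=> ->; apply: eq_integral => w _; congr EFin; rewrite /=; ring.
Qed.

Lemma integral_reward_on_action (g : T -> R) : measurable_fun setT g ->
  P.-integrable setT (fun w => (Y w * \1_S w * g (X w))%:E) ->
  P.-integrable setT (fun w => (pi (X w) * r (X w) * g (X w))%:E) /\
  (\int[P]_w (Y w * \1_S w * g (X w))%:E =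
   \int[P]_w (pi (X w) * r (X w) * g (X w))%:E)%E.
Proof.
move=> mg iYSg.
exact: (cond_eq_comp_integral mX iYS (measurable_funM mpi mr) reward_pi mg iYSg).
Qed.

End action_term.

Section observation.
Context {R : realType} {dO dT : measure_display} {Omega : measurableType dO}
  {T : measurableType dT} (P : probability Omega R).
Variables (d m q : nat) (act : 'I_d -> R) (actbar : 'I_m -> R).
Variables (f : 'I_q -> R -> R) (Xset : set T) (X : Omega -> T).
Variables (A : Omega -> 'I_d) (Y : Omega -> R) (pit : 'I_d -> T -> R).
Variables (rho : T -> R -> R) (W : T -> 'M[R]_d) (pibar : T -> 'I_m).
Hypotheses (mX : measurable_fun setT X) (X_in : forall w, Xset (X w)).
Hypothesis mA : forall k, measurable (A @^-1` [set k]).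
Hypothesis iY : P.-integrable setT (EFin \o Y).
Hypothesis mpit : forall k, measurable_fun setT (pit k).
Hypothesis pit_gt0 : forall k x, Xset x -> 0 < pit k x.
Hypothesis propensity : forall k B, measurable B ->
  P (X @^-1` B `&` A @^-1` [set k]) = (\int[P]_(w in X @^-1` B) (pit k (X w))%:E)%E.
Hypothesis mrho : forall k, measurable_fun setT (fun x => rho x (act k)).
Hypothesis reward : forall k B, measurable B ->
  (\int[P]_(w in X @^-1` B `&` A @^-1` [set k]) (Y w)%:E =
   \int[P]_(w in X @^-1` B `&` A @^-1` [set k]) (rho (X w) (act k))%:E)%E.
Hypothesis rD : \rank (design f act) = q.+1.
Hypothesis regression : forall x, Xset x -> exists beta : 'cV[R]_(q.+1),
  (forall k, rho x (act k) = (fvec f (act k) *m beta) 0 0) /\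
  (forall j, rho x (actbar j) = (fvec f (actbar j) *m beta) 0 0).
Hypothesis pdW : forall x, sym_posdef (W x).
Hypothesis mW : forall k l, measurable_fun setT (fun x => W x k l).
Hypothesis mpibar : forall j, measurable (pibar @^-1` [set j]).

Let K x := Kmat (design f act) (design f actbar) (W x).

Let mK : measurable_mx K.
Proof.
apply: measurable_mx_mul (measurable_mx_cst _).
apply: measurable_mx_mul; first exact: measurable_mx_mul mW (measurable_mx_cst _).
apply: measurable_mx_invmx => [|x]; last exact: unitmx_posdef_gram.
by apply: measurable_mx_mul (measurable_mx_cst _); exact: measurable_mx_mul.
Qed.

Lemma integral_kernel_ips :
  P.-integrable setT (fun w => (Y w * (onehot (A w) *m K (X w) *m
    (onehot (pibar (X w)))^T) 0 0 / pit (A w) (X w))%:E) ->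
  (\int[P]_w (Y w * (onehot (A w) *m K (X w) *m
    (onehot (pibar (X w)))^T) 0 0 / pit (A w) (X w))%:E =
   \int[P]_w (rho (X w) (actbar (pibar (X w))))%:E)%E.
Proof.
move=> iips.
pose g k x := K x k (pibar x) / pit k x.
have mg k : measurable_fun setT (g k).
  apply: measurable_funM; last exact: measurableT_comp measurable_inv (mpit k).
  by apply: (measurable_fun_ord_select (h := fun j x => K x k j)) => // j; exact: mK.
pose S k := A @^-1` [set k].
have ipsE w : Y w * (onehot (A w) *m K (X w) *m (onehot (pibar (X w)))^T) 0 0
    / pit (A w) (X w) = \sum_k Y w * \1_(S k) w * g k (X w).
  rewrite onehot_mulmxE (bigD1 (A w))//= big1 => [|k kA].
    by rewrite addr0 indicE mem_set// mulr1 mulrA.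
  by rewrite indicE memNset ?mulr0 ?mul0r//= => Ak; rewrite Ak eqxx in kA.
have iterm k : P.-integrable setT (fun w => (Y w * \1_(S k) w * g k (X w))%:E).
  apply: le_integrable iips => //.
    apply/measurable_EFinP; apply: measurable_funM; last exact: measurableT_comp.
    apply: measurable_funM; last exact: measurable_indic (mA k).
    exact/measurable_EFinP/(measurable_int _ iY).
  move=> w _; rewrite /= lee_fin indicE.
  have [/set_mem /= <-|] := boolP (w \in S k); last by rewrite mulr0 mul0r normr0.
  by rewrite mulr1 onehot_mulmxE mulrA.
have hact k := integral_reward_on_action mX (mA k) iY (mpit k) (mrho k)
  (propensity k) (reward k) (mg k) (iterm k).
under eq_integral do rewrite ipsE -sumEFin.
rewrite integral_sum//; under eq_bigr do rewrite (hact _).2.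
rewrite -integral_sum//; last by move=> k; exact: (hact k).1.
apply: eq_integral => w _; rewrite sumEFin; congr EFin.
have [beta [rho_act rho_actbar]] := regression (X_in w).
rewrite rho_actbar -(sum_fvec_Kmat actbar beta _ rD (pdW (X w))).
apply: eq_bigr => k _; rewrite -rho_act /g /K.
by field; exact: lt0r_neq0 (pit_gt0 k (X_in w)).
Qed.

End observation.

Unset Implicit Arguments. Set Strict Implicit.

Theorem proposition2
  (R : realType) (dO : measure_display) (Omega : measurableType dO)
  (P : probability Omega R)
  (p n d m q : nat)
  (Xset : set (p.-tuple R))
  (act : 'I_d -> R) (actbar : 'I_m -> R)
  (X0 : Omega -> p.-tuple R)
  (X : 'I_n -> Omega -> p.-tuple R) (A : 'I_n -> Omega -> 'I_d)
  (Rw : 'I_n -> Omega -> R)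
  (pit : 'I_n -> 'I_d -> p.-tuple R -> R)
  (rho : p.-tuple R -> R -> R)
  (f : 'I_q -> R -> R)
  (W : 'I_n -> p.-tuple R -> 'M[R]_d)
  (pibar : p.-tuple R -> 'I_m) :
  (0 < n)%N ->
  injective act -> injective actbar ->
  (* random elements and their measurability *)
  measurable_fun setT X0 -> (forall w, Xset (X0 w)) ->
  (forall i, measurable_fun setT (X i)) ->
  (forall i w, Xset (X i w)) ->
  (forall i k, measurable (A i @^-1` [set k])) ->
  (forall i, measurable_fun setT (Rw i)) ->
  (* (i) independence of the tuples *)
  tuples_independent P X A Rw ->
  (* (ii) X_1, ..., X_n identically distributed as X *)
  (forall i (B : set (p.-tuple R)), measurable B ->
     P (X i @^-1` B) = P (X0 @^-1` B)) ->
  (* (iii) A_i | X_i ~ pit_i(. | X_i), with pit_i > 0 *)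
  (forall i k, measurable_fun setT (pit i k)) ->
  (forall i k x, Xset x -> 0 < pit i k x) ->
  (forall i x, Xset x -> \sum_(k < d) pit i k x = 1) ->
  (forall i k (B : set (p.-tuple R)), measurable B ->
     (P (X i @^-1` B `&` A i @^-1` [set k]) =
     \int[P]_(w in X i @^-1` B) (pit i k (X i w))%:E)%E) ->
  (* (iv) rho(x, a) = E[R_i | X_i = x, A_i = a], the same for every i *)
  (forall k, measurable_fun setT (fun x => rho x (act k))) ->
  (forall j, measurable_fun setT (fun x => rho x (actbar j))) ->
  (forall i, P.-integrable setT (fun w => (Rw i w)%:E)) ->
  (forall i k (B : set (p.-tuple R)), measurable B ->
     (\int[P]_(w in X i @^-1` B `&` A i @^-1` [set k]) (Rw i w)%:E =
     \int[P]_(w in X i @^-1` B `&` A i @^-1` [set k]) (rho (X i w) (act k))%:E)%E) ->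
  (* design matrix D has full column rank q+1 *)
  \rank (design f act) = q.+1 ->
  (* regression assumption *)
  (forall x, Xset x -> exists beta : 'cV[R]_(q.+1),
     (forall k, rho x (act k) = (fvec f (act k) *m beta) 0 0) /\
     (forall j, rho x (actbar j) = (fvec f (actbar j) *m beta) 0 0)) ->
  (* weight matrices *)
  (forall i x, sym_posdef (W i x)) ->
  (forall i k l, measurable_fun setT (fun x => W i x k l)) ->
  (* deterministic new policy *)
  (forall j, measurable (pibar @^-1` [set j])) ->
  (* finiteness of the expectations involved *)
  (forall i, P.-integrable setT (fun w =>
     (Rw i w * (onehot (A i w) *m
        Kmat (design f act) (design f actbar) (W i (X i w)) *m
        (onehot (pibar (X i w)))^T) 0 0 / pit i (A i w) (X i w))%:E)) ->
  P.-integrable setT (fun w => (rho (X0 w) (actbar (pibar (X0 w))))%:E) ->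
  (* conclusion: E[V_K(pibar)] = V(pibar) *)
  (\int[P]_w
     ((n%:R)^-1 * \sum_(i < n)
        Rw i w * (onehot (A i w) *m
          Kmat (design f act) (design f actbar) (W i (X i w)) *m
          (onehot (pibar (X i w)))^T) 0 0 / pit i (A i w) (X i w))%:E
  = \int[P]_w (rho (X0 w) (actbar (pibar (X0 w))))%:E)%E.
Proof.
move=> n_gt0 _ _ mX0 _ mX X_in mA _ _ same_law mpit pit_gt0 _ propensity mrho
  mrhobar iR reward rD regression pdW mW mpibar iips iV.
have mV : measurable_fun setT (fun x => rho x (actbar (pibar x))).
  exact: (measurable_fun_ord_select (h := fun j x => rho x (actbar j))).
have term i : (\int[P]_w (Rw i w * (onehot (A i w) *m
    Kmat (design f act) (design f actbar) (W i (X i w)) *m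
    (onehot (pibar (X i w)))^T) 0 0 / pit i (A i w) (X i w))%:E =
    \int[P]_w (rho (X0 w) (actbar (pibar (X0 w))))%:E)%E.
  rewrite (integral_kernel_ips (mX i) (X_in i) (mA i) (iR i) (mpit i) (pit_gt0 i)
    (propensity i) mrho (reward i) rD regression (pdW i) (mW i) mpibar (iips i)).
  exact: integral_comp_same_law (mX i) mX0 (same_law i) mV iV.
under eq_integral do rewrite EFinM -sumEFin.
rewrite integralZl//; last by apply: integrable_sum => // i _; exact: iips.
rewrite integral_sum//; under eq_bigr do rewrite term.
have /fineK <- := integrable_fin_num measurableT iV.
rewrite sumEFin sumr_const card_ord -EFinM -[fine _ *+ n]mulr_natl mulrA mulVf ?mul1r//.
by rewrite pnatr_eq0 -lt0n.
Qed.
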